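(* For all smooth functions $\varrho,a^1,a^2,a^3$ on $\mathbb{R}^5$, $$\sum_{i_1,\dots,i_5,j_1,\dots,j_5=1}^{5}\varepsilon^{i_1i_2i_3i_4i_5}\varepsilon^{j_1j_2j_3j_4j_5}\,\frac{\partial\varrho}{\partial x^{i_1}}\,\frac{\partial\varrho}{\partial x^{i_2}}\,\frac{\partial^2a^1}{\partial x^{i_3}\partial x^{j_1}}\,\frac{\partial a^1}{\partial x^{j_2}}\,\frac{\partial^2a^2}{\partial x^{i_4}\partial x^{j_3}}\,\frac{\partial a^2}{\partial x^{j_4}}\,\frac{\partial a^3}{\partial x^{i_5}}\,\frac{\partial a^3}{\partial x^{j_5}}=0.$$ This is the formula of the embedding into dimension 5 of the 4D Nambu micro-graph Hamiltonian $H^{(9)}_{d=4}=[1,2,3,5;\ 3,4,5,6]$. That micro-graph has: - Levi-Civita vertices $1,2$ carrying $\varrho\,\varepsilon$; - Casimir vertices $3,4$ carrying $a^1$ and $5,6$ carrying $a^2$, where vertex $2+\ell$ carries $a^1$ of vertex $\ell$ and vertex $4+\ell$ carries $a^2$ of vertex $\ell$. Its embedding is $[1,2,3,5,7;\ 3,4,5,6,8]$, with the new Casimir $a^3$ at vertices $7,8$.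
   Context: $\varepsilon^{i_1\dots i_5}$ denotes the Levi-Civita symbol in dimension 5, and $x^1,\dots,x^5$ are the coordinates on $\mathbb{R}^5$. In the encoding $[\,\cdot\,;\,\cdot\,]$, the $\ell$-th tuple lists the target vertices of the ordered edges issued from Levi-Civita vertex $\ell$. Each edge with summation index $i$ applies $\partial/\partial x^i$ to the content of its target vertex. The embedding from dimension $d$ to $d+1$ is defined as follows: - each Levi-Civita vertex gets one extra, last, edge to a new terminal vertex carrying a new Casimir $a^{d-1}$; - all other edges are kept unchanged. *)

From HB Require Import structures.
From mathcomp Require Import all_boot all_order all_algebra all_fingroup.
From mathcomp Require Import all_classical all_reals all_analysis.
Set Implicit Arguments. Unset Strict Implicit. Unset Printing Implicit Defensive.
Import Order.TTheory GRing.Theory Num.Theory.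
Import numFieldNormedType.Exports.
Local Open Scope ring_scope.

Section Defs.
Variable R : realType.

(* points of R^5 are row vectors; coordinates x^1..x^5 are indexed by 'I_5 *)
Definition evec (i : 'I_5) : 'rV[R]_5 := delta_mx 0 i.

Definition partial (i : 'I_5) (f : 'rV[R]_5 -> R) : 'rV[R]_5 -> R :=
  fun x => 'D_(evec i) f x.

Fixpoint iter_partial (s : seq 'I_5) (f : 'rV[R]_5 -> R) : 'rV[R]_5 -> R :=
  if s is i :: s' then partial i (iter_partial s' f) else f.

Definition smooth (f : 'rV[R]_5 -> R) : Prop :=
  forall s : seq 'I_5,
    continuous (iter_partial s f) /\
    forall (i : 'I_5) (x : 'rV[R]_5), derivable (iter_partial s f) x (evec i).

(* Levi-Civita symbol: sign of the permutation (i_1..i_5), 0 if not a permutation *)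
Definition levi (t : 'I_5 -> 'I_5) : R :=
  \sum_(s : 'S_5 | [forall k, s k == t k]) (-1) ^+ odd_perm s.

End Defs.

(* the index i_(k+1) : 'I_5, k = 0..4 *)
Definition ix (k : nat) : 'I_5 := @inord 4 k.

(* Swapping the first two upper indices i_1, i_2 changes the sign of
   epsilon^{i_1 ... i_5} but leaves the symmetric factor
   d rho/dx^{i_1} * d rho/dx^{i_2} unchanged, so the summand is odd under an
   involution of the index tuples and the sum vanishes. *)

From HB Require Import structures.
From mathcomp Require Import all_boot all_order all_algebra all_fingroup.
From mathcomp Require Import all_classical all_reals all_analysis.

Import Order.TTheory GRing.Theory Num.Theory.
Import numFieldNormedType.Exports.
Local Open Scope ring_scope.

Lemma sumr_anti_involution_eq0 (R : numDomainType) (I : finType)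
    (sw : I -> I) (F : I -> R) :
  involutive sw -> (forall i, F (sw i) = - F i) -> \sum_i F i = 0.
Proof.
move=> swK Fsw; apply/eqP; rewrite -eqNr -sumrN (reindex_inj (can_inj swK)).
by apply/eqP/eq_bigr => i _; rewrite Fsw opprK.
Qed.

Lemma eq_levi (R : realType) {t u : 'I_5 -> 'I_5} :
  t =1 u -> levi R t = levi R u.
Proof. by move=> tu; apply: eq_bigl => s; apply: eq_forallb => k; rewrite tu. Qed.

Lemma levi_tperm (R : realType) (t : 'I_5 -> 'I_5) (i j : 'I_5) :
  i != j -> levi R (t \o tperm i j) = - levi R t.
Proof.
move=> neq_ij; rewrite /levi (reindex_inj (mulgI (tperm i j))) -sumrN.
apply: eq_big => s.
  apply/forallP/forallP => /= st k; last by rewrite permM st.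
  by have := st (tperm i j k); rewrite permM tpermK.
by move=> _; rewrite odd_permM odd_tperm neq_ij signr_addb mulN1r.
Qed.

Lemma ix_neq (k l : nat) : (k < 5)%N -> (l < 5)%N -> k != l -> ix k != ix l.
Proof. by move=> k5 l5; rewrite -val_eqE /= !inordK. Qed.

Theorem mainTheorem3 (R : realType) (rho a1 a2 a3 : 'rV[R]_5 -> R) :
  smooth rho -> smooth a1 -> smooth a2 -> smooth a3 ->
  forall x : 'rV[R]_5,
  \sum_(I : {ffun 'I_5 -> 'I_5}) \sum_(J : {ffun 'I_5 -> 'I_5})
     (levi R I * levi R J
      * partial (I (ix 0)) rho x * partial (I (ix 1)) rho x
      * partial (I (ix 2)) (partial (J (ix 0)) a1) x * partial (J (ix 1)) a1 x
      * partial (I (ix 3)) (partial (J (ix 2)) a2) x * partial (J (ix 3)) a2 x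
      * partial (I (ix 4)) a3 x * partial (J (ix 4)) a3 x) = 0.
Proof.
move=> _ _ _ _ x.
pose tau := tperm (ix 0) (ix 1).
have ix01 : ix 0 != ix 1 by exact: ix_neq.
pose sw (I : {ffun 'I_5 -> 'I_5}) := finfun (I \o tau).
have swK : involutive sw by move=> I; apply/ffunP => k; rewrite /sw !ffunE /= ffunE /= tpermK.
have tau_fix k : (1 < k < 5)%N -> tau (ix k) = ix k.
  by case/andP=> k1 k5; apply: tpermD; apply: ix_neq => //; case: k k1 {k5}=> [|[]].
apply: (@sumr_anti_involution_eq0 _ _ sw) => // I; rewrite -sumrN.
apply: eq_bigr => J _.
rewrite (eq_levi R (ffunE _)) levi_tperm // !ffunE /= tpermL tpermR !tau_fix //.
by rewrite !mulNr (mulrAC (levi R I * levi R J)).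
Qed.
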